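(* Let $m$ be a prime, let $F$ be a field containing a primitive $m$th root of unity, and let $K/F$ be a cyclic Galois extension of degree $m$. Then $K$ has a nonassociative cyclic extension of degree $m$.
   Context: Definition: if $A$ is a nonassociative division algebra (an algebra $A\neq 0$ in which left and right multiplication by every nonzero element are bijective) and $D\subseteq A$ an associative division subalgebra, $A$ is a nonassociative cyclic extension of $D$ of degree $m$ if $A$ is a free left $D$-module of rank $m$ and $\mathrm{Aut}(A)$ has a cyclic subgroup $G$ of order $m$ such that $H|_D=\mathrm{id}_D$ for all $H\in G$. *)

From HB Require Import structures.
From mathcomp Require Import all_boot all_order all_algebra all_fingroup all_solvable all_field.
Set Implicit Arguments. Unset Strict Implicit. Unset Printing Implicit Defensive.
Import GRing.Theory.
Local Open Scope ring_scope.

Section NonassocAlgebras.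
Variables (F : fieldType) (A : lmodType F) (mul : A -> A -> A).

Definition bilinear_mul : Prop :=
  (forall (a : F) (x y z : A), mul (a *: x + y) z = a *: mul x z + mul y z) /\
  (forall (a : F) (x y z : A), mul z (a *: x + y) = a *: mul z x + mul z y).

Definition nonassoc_division : Prop :=
  (exists x : A, x != 0) /\
  (forall a : A, a != 0 -> bijective (mul a) /\ bijective (fun x => mul x a)).

Definition is_algebra_aut (h : A -> A) : Prop :=
  [/\ forall (a : F) (x y : A), h (a *: x + y) = a *: h x + h y,
      forall x y : A, h (mul x y) = mul (h x) (h y)
    & bijective h].

(* (A, mul) is a nonassociative cyclic extension of degree m of the
   associative division subalgebra D = iota(K), K an extension field of F. *)
Definition nonassoc_cyclic_extension (K : fieldExtType F) (iota : K -> A)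
    (m : nat) : Prop :=
  [/\ bilinear_mul,
      nonassoc_division,
      [/\ forall (a : F) (x y : K), iota (a *: x + y) = a *: iota x + iota y,
          forall x y : K, iota (x * y) = mul (iota x) (iota y)
        & injective iota],
      (* A is a free left D-module of rank m (D acting by left multiplication) *)
      [/\ forall (x y : K) (v : A), mul (iota (x * y)) v = mul (iota x) (mul (iota y) v),
          forall v : A, mul (iota 1) v = v
        & exists b : 'I_m -> A,
            bijective (fun c : {ffun 'I_m -> K} => \sum_(i < m) mul (iota (c i)) (b i))]
    & (* Aut(A) has a cyclic subgroup of order m, i.e. one generated by an
         automorphism h of order m, all of whose elements fix D pointwise *)
      exists h : A -> A,
        [/\ is_algebra_aut h,
            forall x : K, h (iota x) = iota x,
            forall v : A, iter m h v = v
          & forall k : nat, (0 < k < m)%N -> exists v : A, iter k h v <> v]].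

End NonassocAlgebras.

Set Warnings "-notation-overridden -ambiguous-paths -notation-incompatible-prefix".
From HB Require Import structures.
From mathcomp Require Import all_boot all_order all_algebra all_fingroup all_solvable all_field.
From mathcomp Require Import zify.
Set Implicit Arguments. Unset Strict Implicit. Unset Printing Implicit Defensive.
Import GRing.Theory.
Local Open Scope ring_scope.

(* For a generator s of Gal(K/F) and a in K outside F (so of degree m over F,
   m being prime), take the nonassociative cyclic algebra
   K[t; s]/K[t; s](t^m - a), i.e. K^m with t x = s(x) t and t^m = a.  In the
   basis 1, t, ..., t^(m-1), right multiplication by q != 0 is the matrix
   Q(q)(a), where Q(q) is a matrix over K[X].  Its determinant is a nonzero
   polynomial of degree < m, and it is fixed by s because conjugating s(Q(q))
   by the cyclic shift of the basis gives Q(q) back up to a diagonal factor;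
   hence det Q(q) lies in F[X] and cannot vanish at a.  So the algebra has no
   zero divisors, and being finite dimensional it is a division algebra.  A
   primitive m-th root of unity w in F gives the automorphism t |-> w t, of
   order m and fixing K. *)

Section CyclicIndex.
Variable n : nat.
Local Notation m := n.+2.

Lemma ord_subE (x y : 'I_m) :
  val (x - y) = if (y <= x)%N then (x - y)%N else (x + m - y)%N.
Proof.
rewrite /= modnDmr; have := ltn_ord x; have := ltn_ord y.
case: (leqP y x) => yx ym xm; last by rewrite modn_small; lia.
by rewrite (_ : x + (m - y) = x - y + m)%N ?modnDr ?modn_small //; lia.
Qed.

Lemma ord_addBE (i k : 'I_m) : (i + val (k - i)%R)%N = (k + (k < i) * m)%N.
Proof.
rewrite ord_subE; have := ltn_ord k; have := ltn_ord i.
by case: (leqP i k) => ik /=; lia.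
Qed.

End CyclicIndex.

Section LinearInjective.
Variables (F : fieldType) (V : vectType F) (f : V -> V).
Hypotheses (f_linear : linear f) (f_ker0 : forall x, f x = 0 -> x = 0).

HB.instance Definition _ := GRing.isLinear.Build F V V *:%R f f_linear.

Lemma linear_ker0_bij : bijective f.
Proof.
have fE : linfun f =1 f by move=> x; rewrite lfunE.
have ker0 : lker (linfun f) == 0%VS.
  by apply/lker0P => x y fxy; apply/subr0_eq/f_ker0; rewrite -fE linearB /= fxy subrr.
by exists (linfun f)^-1%VF => x; rewrite -fE ?lker0_lfunK ?lker0_lfunVK.
Qed.

End LinearInjective.

Lemma cyclic_galois_fixed (F : fieldType) (L : splittingFieldType F)
    (E K : {subfield L}) (s : gal_of E) (x : L) :
  galois K E -> 'Gal(E / K)%g = <[s]>%g -> x \in E -> s x = x -> x \in K.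
Proof.
move=> galKE genGal xE sx; have /galois_fixedField <- := galKE.
apply/(fixedFieldP xE) => g; rewrite genGal => /cycleP[k ->].
by elim: k => [|k IHk]; rewrite ?expg0 ?gal_id // expgSr galM ?IHk.
Qed.

Lemma size_minPoly_prime_dim (F : fieldType) (L : fieldExtType F) (a : L) :
  prime (\dim {:L}) -> a \notin 1%VS -> size (minPoly 1 a) = (\dim {:L}).+1.
Proof.
move=> dim_prime a_notF; rewrite size_minPoly adjoin_degreeE dimv1 divn1; congr _.+1.
apply/(prime_nt_dvdP dim_prime); last exact/field_dimS/subvf.
by move: a_notF; rewrite -adjoin_deg_eq1 adjoin_degreeE dimv1 divn1.
Qed.

Lemma det_reindex (R : comPzRingType) n (M : 'M[R]_n) (f : 'I_n -> 'I_n) :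
  injective f -> \det (\matrix_(i, k) M (f i) (f k)) = \det M.
Proof.
move=> f_inj; pose r := perm f_inj.
have -> : \matrix_(i, k) M (f i) (f k) = perm_mx r *m M *m perm_mx r^-1.
  by rewrite -row_permE -col_permE; apply/matrixP => i k; rewrite !mxE /r !permE.
by rewrite !det_mulmx !det_perm odd_permV mulrC mulrA -expr2 sqrr_sign mul1r.
Qed.

Section CyclicAlgebra.
Variables (F : fieldType) (K : splittingFieldType F) (n : nat) (s : gal_of {:K}).
Local Notation m := n.+2.

(* The matrix of right multiplication by y for [cyc_mul] below, with a
   replaced by an indeterminate. *)
Definition cyc_polymx (y : 'I_m -> K) : 'M[{poly K}]_m :=
  \matrix_(i, k) (((s ^+ i)%g (y (k - i)))%:P * 'X^(k < i)).

Lemma size_det_cyc_polymx y : (size (\det (cyc_polymx y)) <= m)%N.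
Proof.
have size_entry (i k : 'I_m) : (size (cyc_polymx y i k) <= (i != 0 :> nat).+1)%N.
  rewrite mxE; apply: leq_trans (size_polyMleq _ _) _.
  rewrite size_polyXn addnS /=; apply: (leq_add (size_polyC_leq1 _)).
  by case: (ltnP k i) => // ki; rewrite lt0b; apply: contraTneq ki => ->.
apply: leq_trans (size_sum _ _ _) _; apply/bigmax_leqP => p _.
have size_prod : (size (\prod_i cyc_polymx y i (p i))%R <= m)%N.
  apply: leq_trans (size_poly_prod_leq predT (fun i => cyc_polymx y i (p i))) _.
  rewrite leq_subLR (@eq_card _ _ 'I_m) // card_ord addnS ltnS.
  apply: (@leq_trans (\sum_(i < m) (i != 0 :> nat).+1)); first exact: leq_sum.
  by rewrite big_ord_recl (eq_bigr (fun=> 2%N)) // big_const_ord iter_addn_0 /=; lia.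
by rewrite mulr_sign; case: ifP => _; rewrite ?size_polyN.
Qed.

Lemma det_cyc_polymx_neq0_head y : y 0 != 0 -> \det (cyc_polymx y) != 0.
Proof.
move=> y0_neq0; apply: contraNneq (_ : horner_eval 0 (\det (cyc_polymx y)) != 0).
  by move=> ->; rewrite rmorph0.
rewrite -det_map_mx -det_tr det_trig.
  apply/prodf_neq0 => i _; rewrite !mxE /= horner_evalE subrr ltnn mulr1 hornerC.
  by rewrite fmorph_eq0.
by apply/is_trig_mxP => i k ik; rewrite !mxE /= horner_evalE ik hornerCM hornerX mulr0.
Qed.

(* y = y' t^d when y vanishes below d; the right factor is [cyc_polymx] of t^d. *)
Lemma cyc_polymx_shift y (d : 'I_m) : (forall j : 'I_m, (j < d)%N -> y j = 0) ->
  cyc_polymx y = cyc_polymx (fun j => if (j + d < m)%N then y (j + d) else 0)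
    *m (diag_mx (\row_l 'X^((l + d)%R < l)) *m perm_mx (perm (addIr d))).
Proof.
move=> y_lt_d; set r := perm _; apply/matrixP => i k.
have rVE : r^-1%g k = k - d by apply: (canLR (permK r)); rewrite permE subrK.
rewrite mulmxA -[r]invgK -col_permE mxE mul_mx_diag !mxE rVE subrK.
rewrite -mulrA -exprD (addrAC k (- d) (- i)) subrK ord_subE.
case: (leqP d (k - i)%R) => [d_le|d_gt]; last first.
  rewrite y_lt_d // ifF ?rmorph0 ?mul0r //; apply/negbTE; rewrite -leqNgt.
  by have := ltn_ord (k - i); lia.
rewrite subnK // ltn_ord; congr (_ * 'X^_); move: d_le; rewrite !ord_subE.
have := ltn_ord i; have := ltn_ord k; have := ltn_ord d.
by case: (leqP i k); case: (leqP d k) => /=; lia.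
Qed.

Lemma det_cyc_polymx_neq0 (y : {ffun 'I_m -> K}) : y != 0 -> \det (cyc_polymx y) != 0.
Proof.
move=> /eqP y_neq0; have [j0 yj0] : exists j, y j != 0.
  apply/existsP; apply: contra_notT y_neq0 => /existsPn y0.
  by apply/ffunP => j; rewrite ffunE; apply/eqP/negPn.
case: (@arg_minnP _ j0 (fun j => y j != 0) val yj0) => d yd d_min.
have y_lt_d (j : 'I_m) : (j < d)%N -> y j = 0.
  by move=> jd; apply/eqP; apply: contraTT jd => /d_min; rewrite -leqNgt.
rewrite (cyc_polymx_shift y_lt_d) !det_mulmx det_perm det_diag !mulf_neq0 ?signr_eq0 //.
  by apply: det_cyc_polymx_neq0_head; rewrite add0n ltn_ord add0r.
by apply/prodf_neq0 => i _; rewrite mxE expf_neq0 ?polyX_eq0.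
Qed.

Hypothesis s_order : (s ^+ m)%g = 1%g.

Lemma map_cyc_polymx y (d := \row_i 'X^(i == ord_max) : 'rV[{poly K}]_m) :
  map_mx (map_poly s) (cyc_polymx y) *m diag_mx d
    = diag_mx d *m \matrix_(i, k) cyc_polymx y (i + 1) (k + 1).
Proof.
apply/matrixP => i k; rewrite mul_mx_diag mul_diag_mx !mxE rmorphM /=.
rewrite map_polyC map_polyXn /= opprD addrACA subrr addr0.
rewrite -galM ?memvf // -expgSr (@modn_small 1) // !addn1 (expg_mod _ s_order).
rewrite mulrCA -!mulrA -!exprD; congr (_ * 'X^_).
have succ_mod (j : 'I_m) : (j.+1 %% m = if j == ord_max then 0 else j.+1)%N.
  have := ltn_ord j; case: eqP => [->|/eqP]; first by rewrite modnn.
  by rewrite -val_eqE /= => ??; rewrite modn_small //; lia.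
rewrite !succ_mod -!val_eqE /=; have := ltn_ord i; have := ltn_ord k.
move: (val i) (val k) => i' k'.
by case: (i' =P n.+1) => [->|?]; case: (k' =P n.+1) => [->|?] /=; lia.
Qed.

Hypothesis s_fix : forall x, s x = x -> x \in 1%VS.

Lemma det_cyc_polymx_over y : \det (cyc_polymx y) \is a polyOver 1%VS.
Proof.
set d := \row_i 'X^(i == ord_max) : 'rV[{poly K}]_m.
have det_d : \det (diag_mx d) != 0.
  by rewrite det_diag; apply/prodf_neq0 => i _; rewrite mxE expf_neq0 ?polyX_eq0.
have fixed : map_poly s (\det (cyc_polymx y)) = \det (cyc_polymx y).
  apply: (mulIf det_d); rewrite -det_map_mx -det_mulmx map_cyc_polymx det_mulmx.
  by rewrite (det_reindex _ (addIr 1)) mulrC.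
by apply/polyOverP => j; apply: s_fix; rewrite -coef_map fixed.
Qed.

Variable a : K.
Hypothesis a_deg : size (minPoly 1%VS a) = m.+1.

Definition cyc_mx y : 'M[K]_m := map_mx (horner_eval a) (cyc_polymx y).

Lemma cyc_mx_free (y : {ffun 'I_m -> K}) : y != 0 -> row_free (cyc_mx y).
Proof.
move=> y_neq0; rewrite row_free_unit unitmxE unitfE det_map_mx /= horner_evalE.
apply: contraTneq (size_det_cyc_polymx y) => /eqP root_a; rewrite -ltnNge -a_deg.
exact: dvdp_leq (det_cyc_polymx_neq0 y_neq0) (minPoly_dvdp (det_cyc_polymx_over y) root_a).
Qed.

(* Coordinates in the basis 1, t, ..., t^(m-1): indices live in Z/mZ and
   [k < i] flags the products t^i t^(k-i) = a t^k that wrap around. *)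
Definition cyc_mul (p q : {ffun 'I_m -> K}) : {ffun 'I_m -> K} :=
  [ffun k => \sum_i p i * (s ^+ i)%g (q (k - i)) * a ^+ (k < i)].

Lemma cyc_mul_row p q : \row_k cyc_mul p q k = \row_i p i *m cyc_mx q.
Proof.
apply/matrixP => i k; rewrite !mxE ffunE; apply: eq_bigr => j _.
by rewrite !mxE /= horner_evalE hornerCM hornerXn mulrA.
Qed.

Lemma cyc_mul_eq0 p q : (cyc_mul p q == 0) = (p == 0) || (q == 0).
Proof.
have row_eq0 (v : {ffun 'I_m -> K}) : (\row_k v k == 0) = (v == 0).
  apply/eqP/eqP => [/matrixP v0 | ->]; last by apply/matrixP => i k; rewrite !mxE ffunE.
  by apply/ffunP => k; have := v0 0 k; rewrite !mxE ffunE.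
have [->|q_neq0] := eqVneq q 0.
  rewrite orbT; apply/eqP/ffunP => k; rewrite !ffunE big1 // => i _.
  by rewrite ffunE rmorph0 mulr0 mul0r.
by rewrite orbF -!row_eq0 cyc_mul_row mulmx_free_eq0 ?cyc_mx_free.
Qed.

Lemma cyc_mul_linear_l q : linear (cyc_mul ^~ q).
Proof.
move=> c p1 p2; apply/ffunP => k; rewrite !ffunE scaler_sumr -big_split.
by apply: eq_bigr => i _; rewrite !ffunE !mulrDl -!scalerAl.
Qed.

Lemma cyc_mul_linear_r p : linear (cyc_mul p).
Proof.
move=> c q1 q2; apply/ffunP => k; rewrite !ffunE scaler_sumr -big_split.
by apply: eq_bigr => i _; rewrite !ffunE linearP !mulrDr !mulrDl -scalerAr -scalerAl.
Qed.

Definition cyc_embed (x : K) : {ffun 'I_m -> K} := [ffun i => if i == 0 then x else 0].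

Lemma cyc_embed_linear : linear cyc_embed.
Proof. by move=> c x y; apply/ffunP => k; rewrite !ffunE; case: eqP; rewrite ?scaler0 ?addr0. Qed.

Lemma cyc_embed_inj : injective cyc_embed.
Proof. by move=> x y /ffunP /(_ 0); rewrite !ffunE eqxx. Qed.

Lemma cyc_mul_embed_l x v : cyc_mul (cyc_embed x) v = [ffun k => x * v k].
Proof.
apply/ffunP => k; rewrite !ffunE (bigD1 ord0) //= big1 => [|i /negbTE i_neq0].
  by rewrite ffunE eqxx expg0 gal_id subr0 mulr1 addr0.
by rewrite ffunE i_neq0 !mul0r.
Qed.

Lemma cyc_embedM x y : cyc_embed (x * y) = cyc_mul (cyc_embed x) (cyc_embed y).
Proof.
by rewrite cyc_mul_embed_l; apply/ffunP => k; rewrite !ffunE; case: eqP; rewrite ?mulr0.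
Qed.

Definition cyc_basis (i : 'I_m) : {ffun 'I_m -> K} := [ffun j => (j == i)%:R].

Lemma cyc_basis_coord (c : {ffun 'I_m -> K}) :
  \sum_i cyc_mul (cyc_embed (c i)) (cyc_basis i) = c.
Proof.
apply/ffunP => k; rewrite sum_ffunE (bigD1 k) //= big1 => [|i /negbTE i_neq_k].
  by rewrite cyc_mul_embed_l !ffunE eqxx mulr1 addr0.
by rewrite cyc_mul_embed_l !ffunE eq_sym i_neq_k mulr0.
Qed.

Variable w : F.
Hypothesis w_prim : m.-primitive_root w.

Definition cyc_twist (v : {ffun 'I_m -> K}) : {ffun 'I_m -> K} :=
  [ffun i : 'I_m => w ^+ i *: v i].

Lemma cyc_twist_linear : linear cyc_twist.
Proof. by move=> c u v; apply/ffunP => k; rewrite !ffunE scalerDr !scalerA mulrC. Qed.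

Lemma cyc_twistM p q : cyc_twist (cyc_mul p q) = cyc_mul (cyc_twist p) (cyc_twist q).
Proof.
apply/ffunP => k; rewrite !ffunE scaler_sumr; apply: eq_bigr => i _.
rewrite !ffunE linearZ -scalerAr -!scalerAl scalerA -exprD addnC ord_addBE.
by rewrite exprD mulnC exprM (prim_expr_order w_prim) expr1n mulr1.
Qed.

Lemma cyc_twist_embed x : cyc_twist (cyc_embed x) = cyc_embed x.
Proof. by apply/ffunP => i; rewrite !ffunE; case: eqP => [->|]; rewrite ?scale1r ?scaler0. Qed.

Lemma iter_cyc_twist k v : iter k cyc_twist v = [ffun i : 'I_m => w ^+ (i * k) *: v i].
Proof.
elim: k => [|k IHk]; first by apply/ffunP => i; rewrite ffunE muln0 scale1r.
by rewrite iterS IHk; apply/ffunP => i; rewrite !ffunE scalerA -exprD mulnS.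
Qed.

Lemma iter_cyc_twist_order v : iter m cyc_twist v = v.
Proof.
rewrite iter_cyc_twist; apply/ffunP => i.
by rewrite ffunE mulnC exprM (prim_expr_order w_prim) expr1n scale1r.
Qed.

Lemma iter_cyc_twist_neq k : (0 < k < m)%N -> iter k cyc_twist (cyc_basis 1) <> cyc_basis 1.
Proof.
move=> /andP[k_gt0 k_lt_m]; rewrite iter_cyc_twist => /ffunP /(_ 1).
rewrite !ffunE eqxx mul1n -[RHS]scale1r => /(fmorph_inj (in_alg K)) /eqP.
by rewrite -(prim_order_dvd w_prim) => /(dvdn_leq k_gt0); rewrite leqNgt k_lt_m.
Qed.

Lemma cyc_algebra_nonassoc_cyclic_extension :
  nonassoc_cyclic_extension cyc_mul cyc_embed m.
Proof.
split.
- by split=> c x y z; [apply: cyc_mul_linear_l | apply: cyc_mul_linear_r].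
- split=> [|p p_neq0].
    exists (cyc_basis 0); apply: contra_neq (oner_neq0 K) => /ffunP /(_ 0).
    by rewrite !ffunE eqxx.
  split; apply: linear_ker0_bij; [exact: cyc_mul_linear_r | | exact: cyc_mul_linear_l |].
    by move=> q /eqP; rewrite cyc_mul_eq0 (negbTE p_neq0) => /eqP.
  by move=> q /eqP; rewrite cyc_mul_eq0 (negbTE p_neq0) orbF => /eqP.
- by split; [exact: cyc_embed_linear | exact: cyc_embedM | exact: cyc_embed_inj].
- split=> [x y v | v |].
  + by rewrite !cyc_mul_embed_l; apply/ffunP => k; rewrite !ffunE mulrA.
  + by rewrite cyc_mul_embed_l; apply/ffunP => k; rewrite !ffunE mul1r.
  + by exists cyc_basis, id => c; rewrite ?cyc_basis_coord.
- exists cyc_twist; split=> [|||k k_range].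
  + split; [exact: cyc_twist_linear | exact: cyc_twistM |].
    by exists (iter n.+1 cyc_twist) => v; rewrite -?iterSr -?iterS iter_cyc_twist_order.
  + exact: cyc_twist_embed.
  + exact: iter_cyc_twist_order.
  + by exists (cyc_basis 1); apply: iter_cyc_twist_neq.
Qed.

End CyclicAlgebra.

Theorem corollary2p4 (F : fieldType) (K : splittingFieldType F) (m : nat) :
  prime m ->
  (exists w : F, m.-primitive_root w) ->
  galois 1%AS {:K} ->
  cyclic 'Gal({:K} / 1%AS) ->
  \dim {:K} = m ->
  exists (A : lmodType F) (mul : A -> A -> A) (iota : K -> A),
    nonassoc_cyclic_extension mul iota m.
Proof.
move=> m_prime [w w_prim] galK /cyclicP[s genGal] dimK.
have [a a_notF] : exists a : K, a \notin 1%VS.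
  have /subvPn[a _ a_notF] : ~~ (fullv <= (1%VS : {vspace K}))%VS.
    by apply: contraL (prime_gt1 m_prime) => /dimvS; rewrite dimv1 dimK -leqNgt.
  by exists a.
have a_deg : size (minPoly 1 a) = m.+1 by rewrite -dimK size_minPoly_prime_dim ?dimK.
have s_fix x : s x = x -> x \in 1%VS := cyclic_galois_fixed galK genGal (memvf x).
have s_order : (s ^+ m)%g = 1%g.
  suff <- : #[s]%g = m by rewrite expg_order.
  by rewrite /order -genGal -galois_dim // dimv1 divn1.
have [n m_eq] : exists n, m = n.+2 by exists m.-2; have := prime_gt1 m_prime; lia.
rewrite m_eq in w_prim a_deg s_order *.
by do 3 eexists; apply: (cyc_algebra_nonassoc_cyclic_extension s_order s_fix a_deg w_prim).
Qed.
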